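(* A $po$-$\Gamma$-semigroup $M$ is intra-regular if and only if for every fuzzy right ideal $f$ and every fuzzy left ideal $g$ of $M$, we have $f\wedge g\preceq g\circ f$.
   Context: Let $M$ and $\Gamma$ be nonempty sets with a map $M\times\Gamma\times M\to M$, $(a,\gamma,b)\mapsto a\gamma b$, satisfying $(a\gamma b)\mu c=a\gamma(b\mu c)$ for all $a,b,c\in M$, $\gamma,\mu\in\Gamma$. A $po$-$\Gamma$-semigroup is such an $M$ with a partial order $\le$ such that $a\le b$ implies $a\gamma c\le b\gamma c$ and $c\gamma a\le c\gamma b$ for all $c\in M$, $\gamma\in\Gamma$. For $H\subseteq M$, $(H]=\{t\in M: t\le h \text{ for some } h\in H\}$; $M\Gamma a\Gamma a\Gamma M=\{x\gamma a\mu a\rho y: x,y\in M,\gamma,\mu,\rho\in\Gamma\}$. $M$ is intra-regular if $a\in(M\Gamma a\Gamma a\Gamma M]$ for every $a\in M$. A fuzzy subset of $M$ is a map $M\to[0,1]$. For $a\in M$ let $A_a=\{(y,z)\in M\times M: a\le y\gamma z \text{ for some }\gamma\in\Gamma\}$. $(f\circ g)(a)=\bigvee_{(y,z)\in A_a}\min\{f(y),g(z)\}$ if $A_a\ne\emptyset$, and $0$ otherwise. $(f\wedge g)(a)=\min\{f(a),g(a)\}$; $f\preceq g$ means $f(a)\le g(a)$ for all $a$. A fuzzy right (resp. left) ideal is a fuzzy subset $f$ with $f(x\gamma y)\ge f(x)$ (resp. $f(x\gamma y)\ge f(y)$) for all $x,y\in M,\gamma\in\Gamma$, and $x\le y\Rightarrow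 f(x)\ge f(y)$. *)

From Stdlib Require Import Reals.
From Coquelicot Require Import Coquelicot.
Open Scope R_scope.

Section POGamma.
Context {M G : Type} (op : M -> G -> M -> M) (le : M -> M -> Prop).

Definition is_po_gamma_semigroup : Prop :=
  (exists a : M, True) /\ (exists g : G, True) /\
  (forall a b c (g m : G), op (op a g b) m c = op a g (op b m c)) /\
  (forall a, le a a) /\
  (forall a b, le a b -> le b a -> a = b) /\
  (forall a b c, le a b -> le b c -> le a c) /\
  (forall a b c (g : G), le a b -> le (op a g c) (op b g c) /\ le (op c g a) (op c g b)).

Definition intra_regular : Prop :=
  forall a : M, exists (x y : M) (g m r : G),
    le a (op (op (op x g a) m a) r y).

Definition fuzzy_subset (f : M -> R) : Prop := forall x, 0 <= f x <= 1.

Definition fuzzy_right_ideal (f : M -> R) : Prop :=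
  fuzzy_subset f /\
  (forall x y (g : G), f (op x g y) >= f x) /\
  (forall x y, le x y -> f x >= f y).

Definition fuzzy_left_ideal (f : M -> R) : Prop :=
  fuzzy_subset f /\
  (forall x y (g : G), f (op x g y) >= f y) /\
  (forall x y, le x y -> f x >= f y).

Definition A_set (a : M) (p : M * M) : Prop :=
  exists g : G, le a (op (fst p) g (snd p)).

(* (f o g)(a) = sup_{(y,z) in A_a} min (f y) (g z) if A_a nonempty, else 0 *)
Definition fuzzy_comp (f h : M -> R) (a : M) : R :=
  match Lub_Rbar (fun t => exists p, A_set a p /\ t = Rmin (f (fst p)) (h (snd p))) with
  | Finite r => r
  | _ => 0
  end.

Definition fuzzy_meet (f h : M -> R) : M -> R := fun a => Rmin (f a) (h a).

Definition fuzzy_le (f h : M -> R) : Prop := forall a, f a <= h a.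

End POGamma.

(* If M is intra-regular, a ≤ x γ a μ a ρ y exhibits a below the product of
   x γ a and a ρ y, where a fuzzy left ideal g and a fuzzy right ideal f are at
   least g(a) and f(a); hence (g ∘ f)(a) ≥ min(f(a), g(a)).  Conversely, apply
   the inequality to the characteristic functions of the right ideal (a ∪ aΓM]
   and the left ideal (a ∪ MΓa]: at a it forces a ≤ y γ z with y in the left and
   z in the right ideal, and in each of the four resulting cases a ∈ (MΓaΓaΓM]. *)
From Stdlib Require Import Reals Lra Classical ClassicalEpsilon.
From Coquelicot Require Import Coquelicot.

Section FuzzyComposition.
Context {M G : Type} (op : M -> G -> M -> M) (le : M -> M -> Prop).

Lemma fuzzy_comp_ge (f h : M -> R) (a : M) (p : M * M) :
  fuzzy_subset h -> A_set op le a p ->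
  Rmin (h (fst p)) (f (snd p)) <= fuzzy_comp op le h f a.
Proof.
  intros Hh Hp; unfold fuzzy_comp.
  set (E := fun t => exists p, A_set op le a p /\ t = Rmin (h (fst p)) (f (snd p))).
  assert (Ep : E (Rmin (h (fst p)) (f (snd p)))) by (exists p; auto).
  assert (ub1 : is_ub_Rbar E 1).
  { intros t [q [_ ->]]; simpl.
    pose proof (Hh (fst q)); pose proof (Rmin_l (h (fst q)) (f (snd q))); lra. }
  destruct (Lub_Rbar_correct E) as [Hub Hlub].
  destruct (Lub_Rbar E) as [l| |].
  - exact (Hub _ Ep).
  - destruct (Hlub _ ub1).
  - destruct (Hub _ Ep).
Qed.

(* [c] must be nonnegative because an empty [A_a] gives the junk value 0. *)
Lemma fuzzy_comp_le (f h : M -> R) (a : M) (c : R) :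
  0 <= c ->
  (forall p, A_set op le a p -> Rmin (h (fst p)) (f (snd p)) <= c) ->
  fuzzy_comp op le h f a <= c.
Proof.
  intros Hc Hbound; unfold fuzzy_comp.
  set (E := fun t => exists p, A_set op le a p /\ t = Rmin (h (fst p)) (f (snd p))).
  assert (ubc : is_ub_Rbar E c) by (intros t [p [Hp ->]]; exact (Hbound p Hp)).
  destruct (Lub_Rbar_correct E) as [_ Hlub].
  destruct (Lub_Rbar E) as [l| |]; [exact (Hlub _ ubc)| destruct (Hlub _ ubc) | exact Hc].
Qed.

End FuzzyComposition.

Definition chi {M : Type} (P : M -> Prop) (t : M) : R :=
  if excluded_middle_informative (P t) then 1 else 0.

Lemma chi_in {M : Type} (P : M -> Prop) t : P t -> chi P t = 1.
Proof. unfold chi; destruct excluded_middle_informative; tauto. Qed.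

Lemma chi_out {M : Type} (P : M -> Prop) t : ~ P t -> chi P t = 0.
Proof. unfold chi; destruct excluded_middle_informative; tauto. Qed.

Lemma chi_fuzzy_subset {M : Type} (P : M -> Prop) : fuzzy_subset (chi P).
Proof. intro t; unfold chi; destruct excluded_middle_informative; lra. Qed.

Lemma chi_le {M : Type} (P : M -> Prop) s t : (P s -> P t) -> chi P s <= chi P t.
Proof.
  intro Hst; destruct (classic (P s)) as [Hs|Hs].
  - rewrite chi_in, chi_in; auto; lra.
  - rewrite chi_out by exact Hs; apply chi_fuzzy_subset.
Qed.

Lemma Rmin_chi_le_0 {M : Type} (P Q : M -> Prop) s t :
  ~ (P s /\ Q t) -> Rmin (chi P s) (chi Q t) <= 0.
Proof.
  intro Hst; destruct (classic (P s)) as [Hs|Hs].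
  - rewrite (chi_out Q t) by tauto; apply Rmin_r.
  - rewrite chi_out by exact Hs; apply Rmin_l.
Qed.

Section PoGammaSemigroup.
Context {M G : Type} (op : M -> G -> M -> M) (le : M -> M -> Prop).
Hypothesis op_assoc : forall a b c (g m : G), op (op a g b) m c = op a g (op b m c).
Hypothesis le_refl : forall a, le a a.
Hypothesis le_trans : forall a b c, le a b -> le b c -> le a c.
Hypothesis le_opl : forall a b c (g : G), le a b -> le (op a g c) (op b g c).
Hypothesis le_opr : forall a b c (g : G), le a b -> le (op c g a) (op c g b).

Lemma le_op a b c d (g : G) : le a b -> le c d -> le (op a g c) (op b g d).
Proof. intros Hab Hcd; apply le_trans with (op b g c); auto. Qed.

Lemma chi_fuzzy_right_ideal (P : M -> Prop) :
  (forall s t, le s t -> P t -> P s) -> (forall s t (g : G), P s -> P (op s g t)) ->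
  fuzzy_right_ideal op le (chi P).
Proof.
  intros Hdown Hop; split; [apply chi_fuzzy_subset | split].
  - intros s t g; apply Rle_ge, chi_le, Hop.
  - intros s t Hst; apply Rle_ge, chi_le, Hdown, Hst.
Qed.

Lemma chi_fuzzy_left_ideal (P : M -> Prop) :
  (forall s t, le s t -> P t -> P s) -> (forall s t (g : G), P t -> P (op s g t)) ->
  fuzzy_left_ideal op le (chi P).
Proof.
  intros Hdown Hop; split; [apply chi_fuzzy_subset | split].
  - intros s t g; apply Rle_ge, chi_le, Hop.
  - intros s t Hst; apply Rle_ge, chi_le, Hdown, Hst.
Qed.

Definition principal_right_ideal (a t : M) : Prop :=
  le t a \/ exists n (g : G), le t (op a g n).

Definition principal_left_ideal (a t : M) : Prop :=
  le t a \/ exists n (g : G), le t (op n g a).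

Lemma principal_right_ideal_fuzzy a : fuzzy_right_ideal op le (chi (principal_right_ideal a)).
Proof.
  apply chi_fuzzy_right_ideal.
  - intros s t Hst [Ht | [n [g Ht]]]; [left | right; exists n, g]; eauto.
  - intros s t g [Hs | [n [g' Hs]]]; right.
    + exists t, g; auto.
    + exists (op n g t), g'; rewrite <- op_assoc; auto.
Qed.

Lemma principal_left_ideal_fuzzy a : fuzzy_left_ideal op le (chi (principal_left_ideal a)).
Proof.
  apply chi_fuzzy_left_ideal.
  - intros s t Hst [Ht | [n [g Ht]]]; [left | right; exists n, g]; eauto.
  - intros s t g [Ht | [n [g' Ht]]]; right.
    + exists s, g; auto.
    + exists (op s g n), g'; rewrite op_assoc; auto.
Qed.

Lemma intra_regular_at_of_le_op a y z (g : G) :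
  principal_left_ideal a y -> principal_right_ideal a z -> le a (op y g z) ->
  exists x w (g1 g2 g3 : G), le a (op (op (op x g1 a) g2 a) g3 w).
Proof.
  intros Hy Hz Ha.
  (* When an outer factor is missing, substitute the bound on [a] into the
     occurrence of [a] on that side. *)
  destruct Hy as [Hy | [m [g' Hy]]]; destruct Hz as [Hz | [n [g'' Hz]]];
    pose proof (le_trans _ _ _ Ha (le_op _ _ _ _ g Hy Hz)) as H1.
  - exists a, a, g, g, g; rewrite !op_assoc.
    apply (le_trans _ _ _ H1), (le_trans _ _ _ (le_opr _ _ a g H1)).
    apply le_opr, le_opr, H1.
  - exists a, (op n g'' n), g, g, g''; rewrite !op_assoc.
    apply (le_trans _ _ _ H1), le_trans with (op a g (op (op a g (op a g'' n)) g'' n)).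
    + apply le_opr, le_opl, H1.
    + rewrite !op_assoc; apply le_refl.
  - exists (op m g' m), a, g', g, g; rewrite !op_assoc in H1 |- *.
    apply (le_trans _ _ _ H1), le_trans with (op m g' (op (op m g' (op a g a)) g a)).
    + apply le_opr, le_opl, H1.
    + rewrite !op_assoc; apply le_refl.
  - exists m, n, g', g, g''; rewrite !op_assoc in H1; rewrite !op_assoc; exact H1.
Qed.

Lemma meet_le_comp_of_intra_regular :
  intra_regular op le ->
  forall f h : M -> R, fuzzy_right_ideal op le f -> fuzzy_left_ideal op le h ->
    fuzzy_le (fuzzy_meet f h) (fuzzy_comp op le h f).
Proof.
  intros IR f h [_ [Hf _]] [Hh1 [Hh _]] a; unfold fuzzy_meet.
  destruct (IR a) as [x [y [g [m [r Ha]]]]].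
  assert (Hp : A_set op le a (op x g a, op a r y)) by (exists m; simpl; rewrite <- op_assoc; exact Ha).
  apply Rle_trans with (2 := fuzzy_comp_ge op le f h a _ Hh1 Hp); simpl.
  apply Rmin_glb.
  - apply Rle_trans with (h a); [apply Rmin_r | apply Rge_le, Hh].
  - apply Rle_trans with (f a); [apply Rmin_l | apply Rge_le, Hf].
Qed.

Lemma intra_regular_of_meet_le_comp :
  (forall f h : M -> R, fuzzy_right_ideal op le f -> fuzzy_left_ideal op le h ->
     fuzzy_le (fuzzy_meet f h) (fuzzy_comp op le h f)) ->
  intra_regular op le.
Proof.
  intros Hfz a.
  set (Ra := principal_right_ideal a); set (La := principal_left_ideal a).
  pose proof (Hfz _ _ (principal_right_ideal_fuzzy a) (principal_left_ideal_fuzzy a) a) as Hcomp.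
  unfold fuzzy_meet in Hcomp; fold Ra La in Hcomp.
  rewrite (chi_in Ra), (chi_in La), Rmin_left in Hcomp by (lra || (left; apply le_refl)).
  assert (Hcover : exists p, A_set op le a p /\ La (fst p) /\ Ra (snd p)).
  { apply NNPP; intro Hno.
    enough (fuzzy_comp op le (chi La) (chi Ra) a <= 0) by lra.
    apply fuzzy_comp_le; [lra|]; intros p Hp.
    apply Rmin_chi_le_0; intro; apply Hno; exists p; tauto. }
  destruct Hcover as [[y z] [[g Hg] [Hy Hz]]].
  exact (intra_regular_at_of_le_op a y z g Hy Hz Hg).
Qed.

End PoGammaSemigroup.

Theorem theorem16 (M G : Type) (op : M -> G -> M -> M) (le : M -> M -> Prop)
  (HM : is_po_gamma_semigroup op le) :
  intra_regular op le <->
  (forall f h : M -> R, fuzzy_right_ideal op le f -> fuzzy_left_ideal op le h ->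
     fuzzy_le (fuzzy_meet f h) (fuzzy_comp op le h f)).
Proof.
  destruct HM as [_ [_ [Hassoc [Hrefl [_ [Htrans Hmono]]]]]].
  assert (Hopl : forall a b c (g : G), le a b -> le (op a g c) (op b g c))
    by (intros; apply Hmono; assumption).
  assert (Hopr : forall a b c (g : G), le a b -> le (op c g a) (op c g b))
    by (intros; apply Hmono; assumption).
  split.
  - exact (meet_le_comp_of_intra_regular op le Hassoc).
  - exact (intra_regular_of_meet_le_comp op le Hassoc Hrefl Htrans Hopl Hopr).
Qed.
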